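(* Let $L>0$, $\delta\in\mathbb{R}$ and $k\in\mathbb{Z}\setminus\{0\}$. For $j=1,2$ let $u^{in}_j\in H^2_{\mathrm{per}}$ have spatial mean zero and satisfy $u^{in}_j(x+\tfrac{L}{k})=u^{in}_j(x)$ for a.e. $x\in\mathbb{R}$, and assume $\|u^{in}_1\|_{L^2}\neq\|u^{in}_2\|_{L^2}$. Let $u_j(x,t)$ be the solution, with $L$-periodic boundary conditions, of the Korteweg–de Vries equation $$u_t+uu_x+\delta^2u_{xxx}=0,\qquad u(x,0)=u^{in}_j(x).$$ Then: (i) $u_j(x+\tfrac{L}{k},t)=u_j(x,t)$ for a.e. $x\in\mathbb{R}$, for $j=1,2$ and all $t\in\mathbb{R}$; (ii) $P_Mu_1(\cdot,t)=P_Mu_2(\cdot,t)$ for every positive integer $M<|k|$ and every $t\in\mathbb{R}$; (iii) $\limsup_{t\to\infty}\|u_1(\cdot,t)-u_2(\cdot,t)\|_{L^2}>0$.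
   Context: $H^2_{\mathrm{per}}$ denotes the closure of the $L$-periodic trigonometric polynomials on $\mathbb{R}$ in the norm $\big(\sum_{j=0}^2\int_0^L|\partial_x^jf|^2dx\big)^{1/2}$; $L^2$ norms are over one period $[0,L]$. For a positive integer $M$, $P_M$ is the orthogonal projection onto the lowest $M$ Fourier modes, i.e. onto the span of $e^{i\frac{2\pi}{L}nx}$ with $|n|\le M$. The KdV equation is understood to be globally well-posed with unique solutions for such data. *)

(* L-periodic functions are represented by their
   Fourier coefficients  f = sum_{n in Z} fhat n * exp(2 pi i n x / L). *)
From Stdlib Require Import Reals ZArith.
From Coquelicot Require Import Coquelicot.
Open Scope R_scope.

Definition kappa (L : R) : R := 2 * PI / L.

Definition cis (th : R) : C := (cos th, sin th).

Definition zfold {G : AbelianMonoid} (f : Z -> G) (j : nat) : G :=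
  match j with
  | O => f 0%Z
  | S _ => plus (f (Z.of_nat j)) (f (- Z.of_nat j)%Z)
  end.

(* sum over Z (symmetric partial sums) *)
Definition is_zsum (f : Z -> C) (l : C) : Prop := is_series (zfold f) l.

(* real-valued function: conjugate-symmetric coefficients *)
Definition real_coeffs (f : Z -> C) : Prop :=
  forall n : Z, f (- n)%Z = Cconj (f n).

(* H^2 weight sum_{j=0}^2 (kappa n)^(2j), matching the norm
   (sum_{j<=2} int_0^L |d^j f|^2)^(1/2) of the paper *)
Definition h2_weight (L : R) (n : Z) : R :=
  1 + (kappa L * IZR n) ^ 2 + (kappa L * IZR n) ^ 4.

(* squared H^2_per norm:  sum_{j<=2} int_0^L |d^j f|^2 = L sum_n w(n) |fhat n|^2 *)
Definition h2_terms (L : R) (f : Z -> C) : nat -> R :=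
  zfold (fun n => h2_weight L n * (Cmod (f n)) ^ 2).

Definition in_H2per (L : R) (f : Z -> C) : Prop :=
  ex_series (h2_terms L f) /\ real_coeffs f.

Definition H2_norm_sq (L : R) (f : Z -> C) : R := L * Series (h2_terms L f).

(* L^2 norm over one period:  ||f||^2 = L sum_n |fhat n|^2 *)
Definition L2_norm (L : R) (f : Z -> C) : R :=
  sqrt (L * Series (zfold (fun n => (Cmod (f n)) ^ 2))).

Definition csub (f g : Z -> C) : Z -> C := fun n => Cminus (f n) (g n).

(* translation x |-> f (x + a) *)
Definition translate (L a : R) (f : Z -> C) : Z -> C :=
  fun n => Cmult (cis (kappa L * IZR n * a)) (f n).

Definition PM (M : nat) (f : Z -> C) : Z -> C :=
  fun n => if (Z.abs n <=? Z.of_nat M)%Z then f n else RtoC 0.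

(* Solution of
     u_t + u u_x + delta^2 u_xxx = 0 on R_t x (R / L Z)
   in the class C(R; H^2_per), taken in the distributional sense; for such u
   this is equivalent to every Fourier mode being differentiable with
     d/dt uhat_n = - (i kappa n / 2) (u^2)^_n + i delta^2 (kappa n)^3 uhat_n,
   where (u^2)^_n = sum_m uhat_m uhat_{n-m}. *)
Definition kdv_solution (L delta : R) (uin : Z -> C) (u : R -> Z -> C) : Prop :=
  (forall t, in_H2per L (u t)) /\
  (forall t eps, 0 < eps -> exists d, 0 < d /\
      forall s, Rabs (s - t) < d -> H2_norm_sq L (csub (u s) (u t)) < eps) /\
  u 0 = uin /\
  exists c : R -> Z -> C,
    (forall t n, is_zsum (fun m => Cmult (u t m) (u t (n - m)%Z)) (c t n)) /\
    (forall t n,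
       is_derive (fun s => u s n) t
         (Cplus (Cmult (0, - (kappa L * IZR n) / 2) (c t n))
                (Cmult (0, delta ^ 2 * (kappa L * IZR n) ^ 3) (u t n)))).

(* standing assumption of the paper: unique solutions (global well-posedness) *)
Definition kdv_unique (L delta : R) : Prop :=
  forall uin v w, kdv_solution L delta uin v -> kdv_solution L delta uin w -> v = w.

From Stdlib Require Import Reals ZArith Lra Lia Psatz FunctionalExtensionality.
From Coquelicot Require Import Coquelicot.
Open Scope R_scope.

(* Translation by [L/k] commutes with the flow, so by uniqueness both solutions stay
   [L/k]-periodic, and an [L/k]-periodic function has no Fourier modes with
   [0 < |n| < |k|]; the mean (mode 0) is conserved, so all modes [|n| < |k|] vanish.
   The L^2 norm is conserved: in Fourier variables the derivative of the truncated
   energy [sum_{|n| <= K} |u_n|^2] loses the skew dispersive term, and in the remaining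
   nonlinear flux every triad [(a, b, -a-b)] inside [[-K, K]] cancels by symmetry.  The
   leftover products involve a mode beyond [K] and are [O(1/K)] while the H^2 norm
   stays bounded, which it does locally in time.  Hence
   [||u_1(t) - u_2(t)|| >= | ||u_1^in|| - ||u_2^in|| | > 0] for every [t]. *)

(** * Finite symmetric sums over Z *)

Fixpoint zsumR (K : nat) (f : Z -> R) : R :=
  match K with
  | O => f 0%Z
  | S k => zsumR k f + (f (Z.of_nat (S k)) + f (- Z.of_nat (S k))%Z)
  end.

Fixpoint zsumC (K : nat) (f : Z -> C) : C :=
  match K with
  | O => f 0%Z
  | S k => Cplus (zsumC k f) (Cplus (f (Z.of_nat (S k))) (f (- Z.of_nat (S k))%Z))
  end.

Lemma zsumR_S K f :
  zsumR (S K) f = zsumR K f + (f (Z.of_nat (S K)) + f (- Z.of_nat (S K))%Z).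
Proof. reflexivity. Qed.

Lemma zsumC_S K f :
  zsumC (S K) f = Cplus (zsumC K f) (Cplus (f (Z.of_nat (S K))) (f (- Z.of_nat (S K))%Z)).
Proof. reflexivity. Qed.

Lemma sum_n_zfoldR (f : Z -> R) K : sum_n (zfold f) K = zsumR K f.
Proof. induction K; [apply sum_O|]. rewrite sum_Sn, IHK. reflexivity. Qed.

Lemma sum_n_zfoldC (f : Z -> C) K : sum_n (zfold f) K = zsumC K f.
Proof. induction K; [apply sum_O|]. rewrite sum_Sn, IHK. reflexivity. Qed.

Lemma zsumR_ext K (f g : Z -> R) :
  (forall a, (Z.abs a <= Z.of_nat K)%Z -> f a = g a) -> zsumR K f = zsumR K g.
Proof.
  induction K; intro H; [apply H; lia|].
  rewrite !zsumR_S, IHK by (intros; apply H; lia).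
  rewrite (H (Z.of_nat (S K))), (H (- Z.of_nat (S K))%Z) by lia. reflexivity.
Qed.

Lemma zsumR_plus K f g : zsumR K (fun a => f a + g a) = zsumR K f + zsumR K g.
Proof. induction K; [reflexivity|]. rewrite !zsumR_S, IHK. ring. Qed.

Lemma zsumR_scal K c f : zsumR K (fun a => c * f a) = c * zsumR K f.
Proof. induction K; [reflexivity|]. rewrite !zsumR_S, IHK. ring. Qed.

Lemma zsumR_zero K : zsumR K (fun _ => 0) = 0.
Proof. induction K; [reflexivity|]. rewrite zsumR_S, IHK. ring. Qed.

Lemma zsumR_le K (f g : Z -> R) :
  (forall a, (Z.abs a <= Z.of_nat K)%Z -> f a <= g a) -> zsumR K f <= zsumR K g.
Proof.
  induction K; intro H; [apply H; lia|]. rewrite !zsumR_S.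
  assert (zsumR K f <= zsumR K g) by (apply IHK; intros; apply H; lia).
  assert (f (Z.of_nat (S K)) <= g (Z.of_nat (S K))) by (apply H; lia).
  assert (f (- Z.of_nat (S K))%Z <= g (- Z.of_nat (S K))%Z) by (apply H; lia).
  lra.
Qed.

Lemma zsumR_nonneg K (f : Z -> R) : (forall a, 0 <= f a) -> 0 <= zsumR K f.
Proof.
  intro H. rewrite <- (zsumR_zero K). apply zsumR_le. intros; apply H.
Qed.

Lemma zsumR_term_le K (f : Z -> R) a :
  (forall a, 0 <= f a) -> (Z.abs a <= Z.of_nat K)%Z -> f a <= zsumR K f.
Proof.
  intro H. induction K; intro Ha; [replace a with 0%Z by lia; simpl; lra|].
  rewrite zsumR_S. pose proof (zsumR_nonneg K f H).
  pose proof (H (Z.of_nat (S K))). pose proof (H (- Z.of_nat (S K))%Z).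
  destruct (Z.eq_dec a (Z.of_nat (S K))) as [->|]; [lra|].
  destruct (Z.eq_dec a (- Z.of_nat (S K))%Z) as [->|]; [lra|].
  assert (f a <= zsumR K f) by (apply IHK; lia). lra.
Qed.

Lemma fst_zsumC K f : fst (zsumC K f) = zsumR K (fun a => fst (f a)).
Proof. induction K; [reflexivity|]. rewrite zsumC_S, zsumR_S. simpl. rewrite IHK. reflexivity. Qed.

Lemma snd_zsumC K f : snd (zsumC K f) = zsumR K (fun a => snd (f a)).
Proof. induction K; [reflexivity|]. rewrite zsumC_S, zsumR_S. simpl. rewrite IHK. reflexivity. Qed.

Lemma zsumC_ext K (f g : Z -> C) :
  (forall a, (Z.abs a <= Z.of_nat K)%Z -> f a = g a) -> zsumC K f = zsumC K g.
Proof.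
  intro H. apply injective_projections; rewrite ?fst_zsumC, ?snd_zsumC;
    apply zsumR_ext; intros; rewrite H; auto.
Qed.

Lemma zsumC_plus K f g : zsumC K (fun a => Cplus (f a) (g a)) = Cplus (zsumC K f) (zsumC K g).
Proof. apply injective_projections; simpl; rewrite ?fst_zsumC, ?snd_zsumC; apply zsumR_plus. Qed.

Lemma zsumC_scal K c f : zsumC K (fun a => Cmult c (f a)) = Cmult c (zsumC K f).
Proof.
  induction K; [reflexivity|]. rewrite !zsumC_S, IHK.
  apply injective_projections; simpl; ring.
Qed.

Lemma zsumC_zero K : zsumC K (fun _ => RtoC 0) = RtoC 0.
Proof.
  apply injective_projections; rewrite ?fst_zsumC, ?snd_zsumC; apply zsumR_zero.
Qed.

Lemma Cmod_zsumC_le K f : Cmod (zsumC K f) <= zsumR K (fun a => Cmod (f a)).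
Proof.
  induction K; [simpl; lra|]. rewrite zsumC_S, zsumR_S.
  eapply Rle_trans; [apply Cmod_triangle|].
  eapply Rle_trans; [apply Rplus_le_compat_l, Cmod_triangle|]. lra.
Qed.

Lemma zsumC_comm K M (G : Z -> Z -> C) :
  zsumC K (fun a => zsumC M (G a)) = zsumC M (fun b => zsumC K (fun a => G a b)).
Proof.
  induction K; [reflexivity|]. rewrite zsumC_S, IHK, <- !zsumC_plus. reflexivity.
Qed.

Lemma zsumR_opp K f : zsumR K (fun a => f (- a)%Z) = zsumR K f.
Proof. induction K; [reflexivity|]. rewrite !zsumR_S, IHK, Z.opp_involutive. ring. Qed.

Lemma zsumC_opp K f : zsumC K (fun a => f (- a)%Z) = zsumC K f.
Proof.
  induction K; [reflexivity|]. rewrite !zsumC_S, IHK, Z.opp_involutive.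
  apply injective_projections; simpl; ring.
Qed.

Lemma zsumC_widen K M (f : Z -> C) :
  (forall a, (Z.of_nat K < Z.abs a)%Z -> f a = RtoC 0) -> (K <= M)%nat ->
  zsumC M f = zsumC K f.
Proof.
  intros H HKM. induction HKM as [|M HKM IH]; [reflexivity|].
  rewrite zsumC_S, IH, (H (Z.of_nat (S M))), (H (- Z.of_nat (S M))%Z) by lia.
  apply injective_projections; simpl; ring.
Qed.

Lemma zsumC_shift1 K f :
  zsumC K (fun a => f (a - 1)%Z)
  = Cplus (Cminus (zsumC K f) (f (Z.of_nat K))) (f (- Z.of_nat K - 1)%Z).
Proof.
  induction K; [apply injective_projections; simpl; ring|].
  rewrite !zsumC_S, IHK.
  replace (Z.of_nat (S K) - 1)%Z with (Z.of_nat K) by lia.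
  replace (- Z.of_nat (S K) - 1)%Z with (- Z.of_nat (S (S K)))%Z by lia.
  replace (- Z.of_nat K - 1)%Z with (- Z.of_nat (S K))%Z by lia.
  apply injective_projections; simpl; ring.
Qed.

Lemma zsumC_shift_nat M K (f : Z -> C) (j : nat) :
  (forall a, (Z.of_nat K < Z.abs a)%Z -> f a = RtoC 0) -> (j + K <= M)%nat ->
  zsumC M (fun a => f (a - Z.of_nat j)%Z) = zsumC M f.
Proof.
  intro Hf. induction j; intro Hj.
  - apply zsumC_ext. intros. f_equal. lia.
  - rewrite <- IHj by lia.
    transitivity (zsumC M (fun a => f (a - 1 - Z.of_nat j)%Z)).
    { apply zsumC_ext. intros. f_equal. lia. }
    rewrite (zsumC_shift1 M (fun a => f (a - Z.of_nat j)%Z)).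
    rewrite (Hf (Z.of_nat M - Z.of_nat j)%Z), (Hf (- Z.of_nat M - 1 - Z.of_nat j)%Z) by lia.
    apply injective_projections; simpl; ring.
Qed.

Lemma zsumC_shift M K (f : Z -> C) (b : Z) :
  (forall a, (Z.of_nat K < Z.abs a)%Z -> f a = RtoC 0) ->
  (Z.abs b + Z.of_nat K <= Z.of_nat M)%Z ->
  zsumC M (fun a => f (a - b)%Z) = zsumC M f.
Proof.
  intros Hf Hb. destruct (Z_le_gt_dec 0 b) as [Hb0|Hb0].
  - rewrite <- (Z2Nat.id b Hb0). apply zsumC_shift_nat with K; auto. lia.
  - rewrite <- (zsumC_opp M (fun a => f (a - b)%Z)), <- (zsumC_opp M f).
    transitivity (zsumC M (fun a => f (- (a - Z.of_nat (Z.to_nat (- b))))%Z)).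
    { apply zsumC_ext. intros. f_equal. lia. }
    apply (zsumC_shift_nat M K (fun a => f (- a)%Z)); [intros; apply Hf; lia|lia].
Qed.

(* [a |-> - a - b] permutes [{|a| <= K, |a + b| <= K}]. *)
Lemma zsumC_reflect K (f : Z -> C) (b : Z) :
  (Z.abs b <= Z.of_nat K)%Z ->
  (forall a, (Z.of_nat K < Z.abs a)%Z \/ (Z.of_nat K < Z.abs (a + b))%Z -> f a = RtoC 0) ->
  zsumC K (fun a => f (- a - b)%Z) = zsumC K f.
Proof.
  intros Hb Hf.
  rewrite <- (zsumC_opp K (fun a => f (- a - b)%Z)).
  transitivity (zsumC K (fun a => f (a - b)%Z)).
  { apply zsumC_ext. intros. f_equal. lia. }
  rewrite <- (zsumC_widen K (2 * K) (fun a => f (a - b)%Z)) by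
    (intros; try apply Hf; lia).
  rewrite (zsumC_shift (2 * K) K) by (intros; try apply Hf; lia).
  apply zsumC_widen; [intros; apply Hf|]; lia.
Qed.

Lemma zfold_R (g : Z -> R) j :
  zfold g j = match j with O => g 0%Z | S _ => g (Z.of_nat j) + g (- Z.of_nat j)%Z end.
Proof. destruct j; reflexivity. Qed.

Lemma ex_series_zfold_le (g h : Z -> R) :
  (forall a, 0 <= g a <= h a) -> ex_series (zfold h) -> ex_series (zfold g).
Proof.
  intros H E. apply (ex_series_le (V := R_CompleteNormedModule) _ (zfold h)); auto.
  intro j. unfold norm; simpl. rewrite !zfold_R.
  destruct j; [rewrite Rabs_pos_eq; apply H|].
  pose proof (H (Z.of_nat (S j))). pose proof (H (- Z.of_nat (S j))%Z).
  rewrite Rabs_pos_eq; lra.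
Qed.

Lemma ex_series_zfold_lin (g h : Z -> R) x y :
  ex_series (zfold g) -> ex_series (zfold h) -> ex_series (zfold (fun a => x * g a + y * h a)).
Proof.
  intros Eg Eh.
  apply ex_series_ext with (fun j => plus (scal x (zfold g j)) (scal y (zfold h j))).
  { intro j. rewrite !zfold_R. destruct j; cbn; unfold mult; simpl; ring. }
  apply (ex_series_plus (V := R_NormedModule)); apply (ex_series_scal (V := R_NormedModule)); auto.
Qed.

Lemma Series_zfold_lin (g h : Z -> R) x y :
  ex_series (zfold g) -> ex_series (zfold h) ->
  Series (zfold (fun a => x * g a + y * h a)) = x * Series (zfold g) + y * Series (zfold h).
Proof.
  intros Eg Eh.
  rewrite (Series_ext _ (fun j => x * zfold g j + y * zfold h j))
    by (intro j; rewrite !zfold_R; destruct j; ring).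
  rewrite Series_plus, !Series_scal_l; [reflexivity| |];
    apply (ex_series_scal_l (V := R_NormedModule)); assumption.
Qed.

Lemma is_lim_seq_zsumR (g : Z -> R) :
  ex_series (zfold g) -> is_lim_seq (fun K => zsumR K g) (Series (zfold g)).
Proof.
  intro E. apply is_lim_seq_ext with (sum_n (zfold g)); [apply sum_n_zfoldR|].
  exact (Series_correct _ E).
Qed.

Lemma zsumR_le_Series (g : Z -> R) K :
  (forall a, 0 <= g a) -> ex_series (zfold g) -> zsumR K g <= Series (zfold g).
Proof.
  intros H E. apply (is_lim_seq_incr_compare (fun K => zsumR K g)); [now apply is_lim_seq_zsumR|].
  intro n. rewrite zsumR_S.
  pose proof (H (Z.of_nat (S n))). pose proof (H (- Z.of_nat (S n))%Z). lra.
Qed.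

Lemma Series_zfold_nonneg (g : Z -> R) :
  (forall a, 0 <= g a) -> ex_series (zfold g) -> 0 <= Series (zfold g).
Proof.
  intros H E. apply Rle_trans with (zsumR 0 g); [apply zsumR_nonneg, H|].
  now apply zsumR_le_Series.
Qed.

Lemma is_zsum_lim (f : Z -> C) l :
  is_zsum f l -> filterlim (fun K => zsumC K f) eventually (locally l).
Proof. apply filterlim_ext. apply sum_n_zfoldC. Qed.

Lemma zsumC_lim K (a : nat -> Z -> C) (l : Z -> C) :
  (forall n, filterlim (fun J => a J n) eventually (locally (l n))) ->
  filterlim (fun J => zsumC K (a J)) eventually (locally (zsumC K l)).
Proof.
  intro H. induction K; [apply H|]. rewrite zsumC_S.
  apply filterlim_ext with
    (fun J => plus (zsumC K (a J)) (plus (a J (Z.of_nat (S K))) (a J (- Z.of_nat (S K))%Z)));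
    [reflexivity|].
  eapply filterlim_comp_2; [apply IHK| |apply (filterlim_plus (V := C_NormedModule))].
  eapply filterlim_comp_2; [apply H|apply H|apply (filterlim_plus (V := C_NormedModule))].
Qed.

Lemma filterlim_Cmult_l (k : C) (x : nat -> C) l :
  filterlim x eventually (locally l) ->
  filterlim (fun J => Cmult k (x J)) eventually (locally (Cmult k l)).
Proof.
  intro H. eapply filterlim_comp; [apply H|apply (filterlim_scal_r (V := C_NormedModule))].
Qed.

Lemma Cmod_lim_le (x : nat -> C) l M :
  filterlim x eventually (locally l) ->
  (exists N, forall J, (N <= J)%nat -> Cmod (x J) <= M) -> Cmod l <= M.
Proof.
  intros H [N HN].
  change (Rbar_le (Cmod l) M).
  apply (filterlim_le (F := eventually) (fun J => Cmod (x J)) (fun _ => M)).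
  - exists N. exact HN.
  - eapply filterlim_comp; [apply H|apply (filterlim_norm (V := C_NormedModule))].
  - apply filterlim_const.
Qed.

Lemma Cmod_plus_sq_le a b : Cmod (Cplus a b) ^ 2 <= 2 * Cmod a ^ 2 + 2 * Cmod b ^ 2.
Proof.
  pose proof (Cmod_triangle a b). pose proof (Cmod_ge_0 a). pose proof (Cmod_ge_0 b).
  pose proof (Cmod_ge_0 (Cplus a b)).
  assert (Cmod (Cplus a b) ^ 2 <= (Cmod a + Cmod b) ^ 2) by (apply pow_incr; lra).
  pose proof (pow2_ge_0 (Cmod a - Cmod b)). nra.
Qed.

Lemma Cmod_minus_sq_le a b : Cmod (Cminus a b) ^ 2 <= 2 * Cmod a ^ 2 + 2 * Cmod b ^ 2.
Proof. unfold Cminus. rewrite <- (Cmod_opp b). apply Cmod_plus_sq_le. Qed.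

Lemma Cmod_sq_le_minus a b : Cmod a ^ 2 <= 2 * Cmod (Cminus a b) ^ 2 + 2 * Cmod b ^ 2.
Proof.
  replace a with (Cplus (Cminus a b) b) at 1 by (apply injective_projections; simpl; ring).
  apply Cmod_plus_sq_le.
Qed.

Lemma Cmod_cis th : Cmod (cis th) = 1.
Proof.
  unfold Cmod, cis. simpl fst. simpl snd.
  rewrite Rplus_comm, <- !Rsqr_pow2, sin2_cos2. apply sqrt_1.
Qed.

Lemma cis_add x y : Cmult (cis x) (cis y) = cis (x + y).
Proof. unfold cis. apply injective_projections; simpl; rewrite ?cos_plus, ?sin_plus; ring. Qed.

Lemma cis_opp x : cis (- x) = Cconj (cis x).
Proof. unfold cis, Cconj. simpl. rewrite cos_neg, sin_neg. reflexivity. Qed.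

Lemma Cmod_translate L a f n : Cmod (translate L a f n) = Cmod (f n).
Proof. unfold translate. rewrite Cmod_mult, Cmod_cis. ring. Qed.

(** * Coefficient bounds in H^2 *)

Lemma kappa_pos L : 0 < L -> 0 < kappa L.
Proof. intro. unfold kappa. pose proof PI_RGT_0. apply Rdiv_lt_0_compat; lra. Qed.

Lemma h2_weight_ge L n : 1 <= h2_weight L n /\ (kappa L * IZR n) ^ 4 <= h2_weight L n.
Proof. unfold h2_weight. split; nra. Qed.

Lemma h2_term_nonneg L f n : 0 <= h2_weight L n * Cmod (f n) ^ 2.
Proof. pose proof (h2_weight_ge L n). pose proof (pow2_ge_0 (Cmod (f n))). nra. Qed.

Lemma l2_ex_series L f : in_H2per L f -> ex_series (zfold (fun n => Cmod (f n) ^ 2)).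
Proof.
  intros [E _]. apply ex_series_zfold_le with (2 := E). intro a.
  pose proof (h2_weight_ge L a). pose proof (pow2_ge_0 (Cmod (f a))). split; nra.
Qed.

Lemma h2_ex_series_csub L f g :
  ex_series (h2_terms L f) -> ex_series (h2_terms L g) -> ex_series (h2_terms L (csub f g)).
Proof.
  intros Ef Eg. apply ex_series_zfold_le with
    (fun n => 2 * (h2_weight L n * Cmod (f n) ^ 2) + 2 * (h2_weight L n * Cmod (g n) ^ 2));
    [|now apply ex_series_zfold_lin].
  intro a. split; [apply h2_term_nonneg|].
  pose proof (h2_weight_ge L a). pose proof (Cmod_minus_sq_le (f a) (g a)). unfold csub. nra.
Qed.

Definition h2_bound (L b : R) (f : Z -> C) : Prop :=
  0 <= b /\ forall J, zsumR J (fun n => h2_weight L n * Cmod (f n) ^ 2) <= b ^ 2.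

Definition inv_sq (n : Z) : R := if Z.eq_dec n 0 then 1 else / IZR n ^ 2.

Definition decay_const (L : R) : R := 1 + / kappa L ^ 2.

Lemma inv_sq_nonneg n : 0 <= inv_sq n.
Proof.
  unfold inv_sq. destruct Z.eq_dec; [lra|].
  left. apply Rinv_0_lt_compat, pow2_gt_0, not_0_IZR; assumption.
Qed.

Lemma decay_const_ge1 L : 0 < L -> 1 <= decay_const L.
Proof.
  intro HL. pose proof (kappa_pos L HL). unfold decay_const.
  assert (0 < / kappa L ^ 2) by (apply Rinv_0_lt_compat; nra). lra.
Qed.

Lemma inv_sq_succ n :
  inv_sq (Z.of_nat (S n)) = / (INR n + 1) ^ 2 /\ inv_sq (- Z.of_nat (S n))%Z = / (INR n + 1) ^ 2.
Proof.
  unfold inv_sq. split; destruct Z.eq_dec; try lia;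
    rewrite ?opp_IZR, <- INR_IZR_INZ, S_INR; f_equal; ring.
Qed.

Lemma inv_sq_le_inv_K K x : (1 <= K)%nat -> (Z.of_nat K < Z.abs x)%Z -> inv_sq x <= / INR K ^ 2.
Proof.
  intros HK Hx. unfold inv_sq. destruct Z.eq_dec; [lia|].
  assert (HK' : 1 <= INR K) by (apply (le_INR 1); lia).
  apply Rinv_le_contravar; [apply pow2_gt_0; lra|].
  rewrite <- (pow2_abs (IZR x)), <- abs_IZR.
  assert (IZR (Z.of_nat K) <= IZR (Z.abs x)) by (apply IZR_le; lia).
  rewrite <- INR_IZR_INZ in *. apply pow_incr. lra.
Qed.

(* Makes the partial sums of [inv_sq] telescope. *)
Lemma inv_sq_telescope x : 1 <= x -> 2 / (x + 1) ^ 2 <= 2 / x - 2 / (x + 1).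
Proof.
  intro Hx. replace (2 / x - 2 / (x + 1)) with (2 / (x * (x + 1))) by (field; lra).
  unfold Rdiv. apply Rmult_le_compat_l; [lra|]. apply Rinv_le_contravar; nra.
Qed.

Lemma zsumR_inv_sq_le J : zsumR J inv_sq <= 5.
Proof.
  assert (H : forall J, zsumR (S J) inv_sq <= 5 - 2 / INR (S J)).
  { induction J0.
    - rewrite zsumR_S. destruct (inv_sq_succ 0) as [-> ->]. simpl zsumR. unfold inv_sq at 1.
      destruct Z.eq_dec; [|lia]. simpl. lra.
    - rewrite zsumR_S. destruct (inv_sq_succ (S J0)) as [-> ->].
      assert (1 <= INR (S J0)) by (rewrite S_INR; pose proof (pos_INR J0); lra).
      pose proof (inv_sq_telescope (INR (S J0)) H). rewrite (S_INR (S J0)). lra. }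
  destruct J; [simpl; unfold inv_sq; destruct Z.eq_dec; [lra|lia]|].
  specialize (H J). assert (0 < INR (S J)) by (apply lt_0_INR; lia).
  assert (0 < 2 / INR (S J)) by (apply Rdiv_lt_0_compat; lra). lra.
Qed.

Definition inv_sq_tail (K : nat) (m : Z) : R :=
  if Z_lt_dec (Z.of_nat K) (Z.abs m) then inv_sq m else 0.

Lemma inv_sq_tail_nonneg K m : 0 <= inv_sq_tail K m.
Proof. unfold inv_sq_tail. destruct Z_lt_dec; [apply inv_sq_nonneg|lra]. Qed.

Lemma zsumR_inv_sq_tail_le K J : (1 <= K)%nat -> zsumR J (inv_sq_tail K) <= 2 / INR K.
Proof.
  intro HK. assert (HK' : 1 <= INR K) by (apply (le_INR 1); lia).
  assert (Hlow : forall J, (J <= K)%nat -> zsumR J (inv_sq_tail K) = 0).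
  { intros J0 HJ. rewrite <- (zsumR_zero J0). apply zsumR_ext. intros a Ha.
    unfold inv_sq_tail. destruct Z_lt_dec; [lia|reflexivity]. }
  assert (Hhigh : forall d, zsumR (K + d) (inv_sq_tail K) <= 2 / INR K - 2 / INR (K + d)).
  { induction d; [rewrite Nat.add_0_r, Hlow by lia; lra|].
    rewrite Nat.add_succ_r, zsumR_S.
    assert (Hpos : forall m, (Z.of_nat K < Z.abs m)%Z -> inv_sq_tail K m = inv_sq m)
      by (intros m Hm; unfold inv_sq_tail; destruct Z_lt_dec; [reflexivity|lia]).
    rewrite !Hpos by lia.
    destruct (inv_sq_succ (K + d)) as [-> ->].
    assert (1 <= INR (K + d)) by (apply (le_INR 1); lia).
    pose proof (inv_sq_telescope (INR (K + d)) H). rewrite S_INR. lra. }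
  assert (0 < 2 / INR K) by (apply Rdiv_lt_0_compat; lra).
  destruct (le_lt_dec J K); [rewrite Hlow by assumption; lra|].
  replace J with (K + (J - K))%nat by lia. specialize (Hhigh (J - K)%nat).
  assert (0 < 2 / INR (K + (J - K))) by (apply Rdiv_lt_0_compat; [lra|apply lt_0_INR; lia]).
  lra.
Qed.

(* AM-GM: [|n| F <= (n^4 F^2 + 1/n^2) / 2]. *)
Lemma abs_mul_le_h2_term L F n : 0 < L -> 0 <= F ->
  Rabs (IZR n) * F <= (h2_weight L n * F ^ 2 / kappa L ^ 4 + inv_sq n) / 2.
Proof.
  intros HL HF. pose proof (kappa_pos L HL). pose proof (h2_weight_ge L n) as [_ W].
  assert (Hk4 : 0 < kappa L ^ 4) by (apply pow_lt; assumption).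
  assert (Hn4 : IZR n ^ 4 * F ^ 2 <= h2_weight L n * F ^ 2 / kappa L ^ 4).
  { apply (Rle_div_r _ _ _ Hk4).
    replace (IZR n ^ 4 * F ^ 2 * kappa L ^ 4) with ((kappa L * IZR n) ^ 4 * F ^ 2) by ring.
    apply Rmult_le_compat_r; [apply pow2_ge_0|assumption]. }
  unfold inv_sq. destruct Z.eq_dec as [->|Hn].
  - rewrite Rabs_R0. pose proof (pow2_ge_0 F).
    assert (0 <= h2_weight L 0 * F ^ 2 / kappa L ^ 4) by (apply Rdiv_le_0_compat; nra).
    lra.
  - set (t := Rabs (IZR n)).
    assert (Ht : 0 < t) by (apply Rabs_pos_lt, not_0_IZR, Hn).
    assert (Ht2 : IZR n ^ 2 = t ^ 2) by (unfold t; rewrite <- (pow2_abs (IZR n)); reflexivity).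
    replace (IZR n ^ 4) with ((IZR n ^ 2) ^ 2) in Hn4 by ring. rewrite Ht2 in Hn4 |- *.
    assert ((t ^ 2) ^ 2 * F ^ 2 + / t ^ 2 - 2 * (t * F) = (t ^ 2 * F - / t) ^ 2) by (field; lra).
    pose proof (pow2_ge_0 (t ^ 2 * F - / t)). lra.
Qed.

(** * Cancellation in the nonlinear flux *)

Definition triad (K : nat) (u : Z -> C) (a b : Z) : C :=
  if (Z.abs (a + b) <=? Z.of_nat K)%Z then Cmult (u a) (Cmult (u b) (u (- a - b)%Z))
  else RtoC 0.

Lemma triad_comm K u a b : triad K u a b = triad K u b a.
Proof.
  unfold triad. rewrite Z.add_comm. replace (- b - a)%Z with (- a - b)%Z by lia.
  destruct (_ <=? _)%Z; [apply injective_projections; simpl; ring|reflexivity].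
Qed.

Lemma zsumC_triad_swap K u :
  zsumC K (fun a => zsumC K (fun b => Cmult (RtoC (IZR b)) (triad K u a b)))
  = zsumC K (fun a => zsumC K (fun b => Cmult (RtoC (IZR a)) (triad K u a b))).
Proof.
  rewrite zsumC_comm. apply zsumC_ext; intros a _. apply zsumC_ext; intros b _.
  rewrite triad_comm. reflexivity.
Qed.

Lemma zsumC_triad_third K u :
  zsumC K (fun a => zsumC K (fun b => Cmult (RtoC (IZR (- a - b))) (triad K u a b)))
  = zsumC K (fun a => zsumC K (fun b => Cmult (RtoC (IZR a)) (triad K u a b))).
Proof.
  rewrite (zsumC_comm K K (fun a b => Cmult (RtoC (IZR (- a - b))) (triad K u a b))),
    (zsumC_comm K K (fun a b => Cmult (RtoC (IZR a)) (triad K u a b))).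
  apply zsumC_ext; intros b Hb.
  set (g := fun x => if (Z.abs x <=? Z.of_nat K)%Z then Cmult (RtoC (IZR x)) (triad K u x b)
                     else RtoC 0).
  transitivity (zsumC K (fun a => g (- a - b)%Z)).
  { apply zsumC_ext; intros a Ha. unfold g, triad.
    replace (- a - b + b)%Z with (- a)%Z by lia. replace (- (- a - b) - b)%Z with a by lia.
    destruct (Z.leb_spec (Z.abs (- a - b)) (Z.of_nat K));
      destruct (Z.leb_spec (Z.abs (a + b)) (Z.of_nat K));
      destruct (Z.leb_spec (Z.abs (- a)) (Z.of_nat K)); try lia;
      apply injective_projections; simpl; ring. }
  rewrite zsumC_reflect; [|assumption|].
  2:{ intros x Hx. unfold g, triad.
      destruct (Z.leb_spec (Z.abs x) (Z.of_nat K)); [|reflexivity].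
      destruct (Z.leb_spec (Z.abs (x + b)) (Z.of_nat K)); [lia|].
      apply injective_projections; simpl; ring. }
  apply zsumC_ext; intros a Ha. unfold g.
  destruct (Z.leb_spec (Z.abs a) (Z.of_nat K)); [reflexivity|lia].
Qed.

(* The three indices of a triad sum to zero, and the triad sum is invariant under
   permuting them, so three copies of the sum add up to zero. *)
Lemma zsumC_triad_cancel K u :
  zsumC K (fun a => zsumC K (fun b => Cmult (RtoC (IZR a)) (triad K u a b))) = RtoC 0.
Proof.
  assert (E : Cplus (Cplus
      (zsumC K (fun a => zsumC K (fun b => Cmult (RtoC (IZR b)) (triad K u a b))))
      (zsumC K (fun a => zsumC K (fun b => Cmult (RtoC (IZR (- a - b))) (triad K u a b)))))
      (zsumC K (fun a => zsumC K (fun b => Cmult (RtoC (IZR a)) (triad K u a b)))) = RtoC 0).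
  { rewrite <- !zsumC_plus, <- (zsumC_zero K). apply zsumC_ext; intros a _.
    rewrite <- !zsumC_plus, <- (zsumC_zero K). apply zsumC_ext; intros b _.
    rewrite minus_IZR, opp_IZR. apply injective_projections; simpl; ring. }
  rewrite zsumC_triad_swap, zsumC_triad_third in E.
  apply (f_equal fst) in E as E1. apply (f_equal snd) in E as E2. simpl in E1, E2.
  apply injective_projections; simpl; lra.
Qed.

Definition conv_partial (u : Z -> C) (J : nat) (n : Z) : C :=
  zsumC J (fun m => Cmult (u m) (u (n - m)%Z)).

Definition flux_partial (u : Z -> C) (K J : nat) : C :=
  zsumC K (fun n => Cmult (RtoC (IZR n)) (Cmult (u (- n)%Z) (conv_partial u J n))).

Definition in_core (K : nat) (n m : Z) : bool :=
  andb (Z.abs m <=? Z.of_nat K)%Z (Z.abs (n - m) <=? Z.of_nat K)%Z.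

Definition conv_tail (u : Z -> C) (K J : nat) (n : Z) : R :=
  zsumR J (fun m => if in_core K n m then 0 else Cmod (u m) * Cmod (u (n - m)%Z)).

Lemma flux_core_zero u K J : (K <= J)%nat ->
  zsumC K (fun n => Cmult (RtoC (IZR n)) (Cmult (u (- n)%Z)
    (zsumC J (fun m => if in_core K n m then Cmult (u m) (u (n - m)%Z) else RtoC 0))))
  = RtoC 0.
Proof.
  intro HKJ. rewrite <- (zsumC_opp K).
  transitivity (zsumC K (fun a => Cmult (RtoC (-1))
                  (zsumC K (fun b => Cmult (RtoC (IZR a)) (triad K u a b))))).
  { apply zsumC_ext; intros a Ha. rewrite (zsumC_widen K J); [|intros m Hm|assumption].
    2:{ unfold in_core. destruct (Z.leb_spec (Z.abs m) (Z.of_nat K)); [lia|reflexivity]. }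
    rewrite <- !zsumC_scal. apply zsumC_ext; intros b Hb. unfold in_core, triad.
    rewrite Z.opp_involutive.
    destruct (Z.leb_spec (Z.abs b) (Z.of_nat K)); [|lia].
    destruct (Z.leb_spec (Z.abs (- a - b)) (Z.of_nat K));
      destruct (Z.leb_spec (Z.abs (a + b)) (Z.of_nat K)); try lia; simpl andb;
      rewrite ?opp_IZR; apply injective_projections; simpl; ring. }
  rewrite zsumC_scal, zsumC_triad_cancel. apply injective_projections; simpl; ring.
Qed.

(* Only the products leaving the core [|m|, |n - m| <= K] survive the cancellation. *)
Lemma Cmod_flux_partial_le u K J : (K <= J)%nat ->
  Cmod (flux_partial u K J)
  <= zsumR K (fun n => Rabs (IZR n) * Cmod (u (- n)%Z) * conv_tail u K J n).
Proof.
  intro HKJ.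
  set (tail := fun n m => if in_core K n m then RtoC 0 else Cmult (u m) (u (n - m)%Z)).
  assert (Split : flux_partial u K J = Cplus
    (zsumC K (fun n => Cmult (RtoC (IZR n)) (Cmult (u (- n)%Z)
       (zsumC J (fun m => if in_core K n m then Cmult (u m) (u (n - m)%Z) else RtoC 0)))))
    (zsumC K (fun n => Cmult (RtoC (IZR n)) (Cmult (u (- n)%Z) (zsumC J (tail n)))))).
  { unfold flux_partial, conv_partial. rewrite <- zsumC_plus. apply zsumC_ext; intros n _.
    replace (zsumC J (fun m => Cmult (u m) (u (n - m)%Z))) with
      (Cplus (zsumC J (fun m => if in_core K n m then Cmult (u m) (u (n - m)%Z) else RtoC 0))
             (zsumC J (tail n))).
    - apply injective_projections; simpl; ring.
    - rewrite <- zsumC_plus. apply zsumC_ext; intros m _. unfold tail.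
      destruct in_core; apply injective_projections; simpl; ring. }
  rewrite Split, flux_core_zero by assumption.
  eapply Rle_trans; [rewrite Cplus_0_l; apply Cmod_zsumC_le|]. apply zsumR_le; intros n _.
  rewrite !Cmod_mult, Cmod_R, Rmult_assoc.
  apply Rmult_le_compat_l; [apply Rabs_pos|]. apply Rmult_le_compat_l; [apply Cmod_ge_0|].
  eapply Rle_trans; [apply Cmod_zsumC_le|]. apply zsumR_le; intros m _. unfold tail.
  destruct in_core; [rewrite Cmod_0; lra|rewrite Cmod_mult; lra].
Qed.

Definition flux_const (L b : R) : R :=
  (b ^ 2 / kappa L ^ 4 + 5) / 2 * (b ^ 2 * decay_const L * (2 + 5 * decay_const L)).

Section H2Bound.

Variables (L b : R) (f : Z -> C).
Hypotheses (HL : 0 < L) (Hf : h2_bound L b f).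

Lemma h2_bound_term n : h2_weight L n * Cmod (f n) ^ 2 <= b ^ 2.
Proof.
  eapply Rle_trans; [|apply (proj2 Hf (Z.to_nat (Z.abs n)))].
  apply (zsumR_term_le _ (fun n => h2_weight L n * Cmod (f n) ^ 2)); [|lia].
  intro; apply h2_term_nonneg.
Qed.

Lemma h2_bound_coeff n : Cmod (f n) <= b.
Proof.
  pose proof (h2_bound_term n). pose proof (proj1 Hf). pose proof (h2_weight_ge L n).
  pose proof (Cmod_ge_0 (f n)). assert (Cmod (f n) ^ 2 <= b ^ 2) by nra. nra.
Qed.

Lemma h2_bound_coeff_decay n : Cmod (f n) <= b * decay_const L * inv_sq n.
Proof.
  pose proof (kappa_pos L HL). pose proof (decay_const_ge1 L HL). pose proof (proj1 Hf).
  pose proof (h2_bound_coeff n). unfold inv_sq. destruct Z.eq_dec as [->|Hn]; [nra|].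
  assert (Hn2 : 0 < IZR n ^ 2) by (apply pow2_gt_0, not_0_IZR, Hn).
  set (k2 := (kappa L * IZR n) ^ 2).
  assert (Hk2 : 0 < k2)
    by (apply pow2_gt_0, Rmult_integral_contrapositive; split; [lra|apply not_0_IZR, Hn]).
  assert (Hdec : k2 * Cmod (f n) <= b).
  { pose proof (h2_bound_term n). pose proof (h2_weight_ge L n). pose proof (Cmod_ge_0 (f n)).
    assert ((k2 * Cmod (f n)) ^ 2 <= b ^ 2).
    { replace ((k2 * Cmod (f n)) ^ 2) with ((kappa L * IZR n) ^ 4 * Cmod (f n) ^ 2)
        by (unfold k2; ring). nra. }
    nra. }
  assert (Cmod (f n) <= b / k2) by (apply Rle_div_r; lra).
  apply Rle_trans with (b / k2); [assumption|].
  assert (IZR n <> 0) by (apply not_0_IZR, Hn).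
  replace (b / k2) with (b * / kappa L ^ 2 * / IZR n ^ 2) by (unfold k2; field; lra).
  apply Rmult_le_compat_r; [left; apply Rinv_0_lt_compat, Hn2|].
  apply Rmult_le_compat_l; [assumption|]. unfold decay_const. lra.
Qed.


Lemma h2_bound_weighted_l1 K :
  zsumR K (fun n => Rabs (IZR n) * Cmod (f n)) <= (b ^ 2 / kappa L ^ 4 + 5) / 2.
Proof.
  pose proof (kappa_pos L HL). assert (Hk4 : 0 < kappa L ^ 4) by (apply pow_lt; assumption).
  eapply Rle_trans.
  { apply zsumR_le. intros a _. apply (abs_mul_le_h2_term L (Cmod (f a)) a HL (Cmod_ge_0 _)). }
  replace (zsumR K (fun a => (h2_weight L a * Cmod (f a) ^ 2 / kappa L ^ 4 + inv_sq a) / 2))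
    with (/ 2 * (/ kappa L ^ 4 * zsumR K (fun a => h2_weight L a * Cmod (f a) ^ 2) + zsumR K inv_sq))
    by (rewrite <- zsumR_scal, <- zsumR_plus, <- zsumR_scal; apply zsumR_ext; intros; unfold Rdiv; ring).
  pose proof (zsumR_inv_sq_le K). pose proof (proj2 Hf K).
  assert (/ kappa L ^ 4 * zsumR K (fun a => h2_weight L a * Cmod (f a) ^ 2) <= / kappa L ^ 4 * b ^ 2)
    by (apply Rmult_le_compat_l; [left; apply Rinv_0_lt_compat|]; assumption).
  unfold Rdiv. lra.
Qed.


Lemma conv_tail_term_le K n m : (1 <= K)%nat ->
  (if in_core K n m then 0 else Cmod (f m) * Cmod (f (n - m)%Z))
  <= b ^ 2 * decay_const L * inv_sq_tail K m
     + b ^ 2 * decay_const L ^ 2 / INR K ^ 2 * inv_sq m.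
Proof.
  intro HK. set (A := decay_const L).
  assert (HA : 1 <= A) by apply (decay_const_ge1 L HL).
  assert (HK' : 1 <= INR K) by (apply (le_INR 1); lia).
  pose proof (proj1 Hf) as Hb. pose proof (inv_sq_nonneg m). pose proof (inv_sq_tail_nonneg K m).
  pose proof (h2_bound_coeff_decay m) as Dm. pose proof (h2_bound_coeff_decay (n - m)) as Dnm.
  pose proof (h2_bound_coeff (n - m)) as Bnm.
  pose proof (Cmod_ge_0 (f m)). pose proof (Cmod_ge_0 (f (n - m)%Z)).
  assert (0 <= b ^ 2 * A * inv_sq_tail K m) by (apply Rmult_le_pos; [nra|assumption]).
  assert (0 <= b ^ 2 * A ^ 2 / INR K ^ 2 * inv_sq m)
    by (apply Rmult_le_pos; [apply Rdiv_le_0_compat; nra|assumption]).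
  fold A in Dm, Dnm.
  unfold in_core. destruct (Z.leb_spec (Z.abs m) (Z.of_nat K)) as [Hm|Hm]; cbv [andb].
  - destruct (Z.leb_spec (Z.abs (n - m)) (Z.of_nat K)) as [Hnm|Hnm]; [lra|].
    pose proof (inv_sq_le_inv_K K (n - m) HK Hnm).
    assert (Cmod (f (n - m)%Z) <= b * A / INR K ^ 2).
    { eapply Rle_trans; [apply Dnm|]. unfold Rdiv. apply Rmult_le_compat_l; nra. }
    assert (Cmod (f m) * Cmod (f (n - m)%Z) <= (b * A * inv_sq m) * (b * A / INR K ^ 2))
      by (apply Rmult_le_compat; assumption).
    replace (b * A * inv_sq m * (b * A / INR K ^ 2)) with (b ^ 2 * A ^ 2 / INR K ^ 2 * inv_sq m)
      in * by (field; lra).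
    lra.
  - assert (inv_sq_tail K m = inv_sq m)
      by (unfold inv_sq_tail; destruct Z_lt_dec; [reflexivity|lia]).
    assert (Cmod (f m) * Cmod (f (n - m)%Z) <= (b * A * inv_sq m) * b)
      by (apply Rmult_le_compat; assumption).
    nra.
Qed.

Lemma conv_tail_le K J n : (1 <= K)%nat ->
  conv_tail f K J n <= b ^ 2 * decay_const L * (2 + 5 * decay_const L) / INR K.
Proof.
  intro HK. set (A := decay_const L).
  assert (HA : 1 <= A) by apply (decay_const_ge1 L HL).
  assert (HK' : 1 <= INR K) by (apply (le_INR 1); lia).
  assert (HbA : 0 <= b ^ 2 * A) by (pose proof (pow2_ge_0 b); nra).
  unfold conv_tail.
  eapply Rle_trans; [apply zsumR_le; intros m _; apply (conv_tail_term_le K n m HK)|].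
  fold A. rewrite zsumR_plus, !zsumR_scal.
  pose proof (zsumR_inv_sq_tail_le K J HK). pose proof (zsumR_inv_sq_le J).
  assert (b ^ 2 * A * zsumR J (inv_sq_tail K) <= b ^ 2 * A * (2 / INR K))
    by (apply Rmult_le_compat_l; assumption).
  assert (b ^ 2 * A ^ 2 / INR K ^ 2 * zsumR J inv_sq <= b ^ 2 * A ^ 2 / INR K ^ 2 * 5)
    by (apply Rmult_le_compat_l; [apply Rdiv_le_0_compat; nra|assumption]).
  assert (b ^ 2 * A ^ 2 / INR K ^ 2 * 5 <= b ^ 2 * A ^ 2 * 5 / INR K).
  { unfold Rdiv. replace (b ^ 2 * A ^ 2 * / INR K ^ 2 * 5) with (b ^ 2 * A ^ 2 * 5 * / INR K ^ 2)
      by ring.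
    apply Rmult_le_compat_l; [nra|]. apply Rinv_le_contravar; nra. }
  replace (b ^ 2 * A * (2 + 5 * A) / INR K) with (b ^ 2 * A * (2 / INR K) + b ^ 2 * A ^ 2 * 5 / INR K)
    by (field; lra).
  lra.
Qed.

Lemma Cmod_flux_partial_bound K J : (1 <= K)%nat -> (K <= J)%nat ->
  Cmod (flux_partial f K J) <= flux_const L b / INR K.
Proof.
  intros HK HKJ. set (T := b ^ 2 * decay_const L * (2 + 5 * decay_const L) / INR K).
  eapply Rle_trans; [apply Cmod_flux_partial_le, HKJ|].
  eapply Rle_trans.
  { apply (zsumR_le K _ (fun n => T * (Rabs (IZR (- n)) * Cmod (f (- n)%Z)))). intros n _.
    rewrite opp_IZR, Rabs_Ropp, (Rmult_comm T). apply Rmult_le_compat_l.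
    - apply Rmult_le_pos; [apply Rabs_pos|apply Cmod_ge_0].
    - apply conv_tail_le, HK. }
  rewrite zsumR_scal, (zsumR_opp K (fun n => Rabs (IZR n) * Cmod (f n))).
  assert (0 <= T).
  { eapply Rle_trans; [|apply (conv_tail_le K J 0%Z HK)]. apply zsumR_nonneg. intro m.
    destruct in_core; [lra|apply Rmult_le_pos; apply Cmod_ge_0]. }
  unfold flux_const. replace (_ * _ / INR K) with (T * ((b ^ 2 / kappa L ^ 4 + 5) / 2))
    by (unfold T; pose proof (kappa_pos L HL); field; split; [lra|apply not_0_INR; lia]).
  apply Rmult_le_compat_l; [assumption|apply h2_bound_weighted_l1].
Qed.

Lemma Cmod_flux_bound K (c : Z -> C) : (1 <= K)%nat ->
  (forall n, is_zsum (fun m => Cmult (f m) (f (n - m)%Z)) (c n)) ->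
  Cmod (zsumC K (fun n => Cmult (RtoC (IZR n)) (Cmult (f (- n)%Z) (c n))))
  <= flux_const L b / INR K.
Proof.
  intros HK Hc. apply Cmod_lim_le with (x := flux_partial f K).
  - apply zsumC_lim. intro n.
    apply filterlim_Cmult_l, filterlim_Cmult_l, is_zsum_lim, Hc.
  - exists K. intros J HJ. apply Cmod_flux_partial_bound; assumption.
Qed.

End H2Bound.

Notation RR2 := (prod_NormedModule R_AbsRing R_NormedModule R_NormedModule).

Lemma is_derive_fst (f : R -> C) t l :
  is_derive f t l -> is_derive (fun s => fst (f s)) t (fst l).
Proof.
  intro H. eapply filterdiff_ext_lin.
  - apply (filterdiff_comp' f (fun p : RR2 => fst p) t _ (fun p : RR2 => fst p) H).
    apply filterdiff_linear, is_linear_fst.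
  - reflexivity.
Qed.

Lemma is_derive_snd (f : R -> C) t l :
  is_derive f t l -> is_derive (fun s => snd (f s)) t (snd l).
Proof.
  intro H. eapply filterdiff_ext_lin.
  - apply (filterdiff_comp' f (fun p : RR2 => snd p) t _ (fun p : RR2 => snd p) H).
    apply filterdiff_linear, is_linear_snd.
  - reflexivity.
Qed.

Lemma norm_RR2 (z : C) : @norm R_AbsRing RR2 z = Cmod z.
Proof.
  unfold norm; simpl. unfold prod_norm, Cmod. simpl. unfold norm; simpl. unfold abs; simpl.
  f_equal. rewrite !Rmult_1_r, <- !Rsqr_def, <- !Rsqr_abs. reflexivity.
Qed.

Lemma is_linear_Cmult (k : C) : is_linear (U := RR2) (V := RR2) (fun z => Cmult k z).
Proof.
  split.
  - intros x y. apply injective_projections; simpl; unfold plus; simpl;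
      unfold prod_plus, plus; simpl; ring.
  - intros r x. apply injective_projections; simpl; unfold scal; simpl;
      unfold prod_scal, scal; simpl; unfold mult; simpl; ring.
  - exists (Cmod k + 1). split; [pose proof (Cmod_ge_0 k); lra|].
    intro x. rewrite !norm_RR2, Cmod_mult. pose proof (Cmod_ge_0 x). nra.
Qed.

Lemma is_derive_Cmult_l (f : R -> C) t l k :
  is_derive f t l -> is_derive (fun s => Cmult k (f s)) t (Cmult k l).
Proof.
  intro H. eapply filterdiff_ext_lin.
  - apply (filterdiff_comp' f (fun z => Cmult k z) t _ (fun z => Cmult k z) H).
    apply filterdiff_linear, is_linear_Cmult.
  - intro y. apply injective_projections; simpl; unfold scal; simpl;
      unfold prod_scal, scal; simpl; unfold mult; simpl; ring.
Qed.

Lemma is_derive_Cmod_sq (f : R -> C) t l : is_derive f t l ->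
  is_derive (fun s => Cmod (f s) ^ 2) t (2 * (fst (f t) * fst l + snd (f t) * snd l)).
Proof.
  intro H. apply is_derive_ext with (fun s => fst (f s) ^ 2 + snd (f s) ^ 2);
    [intro s; symmetry; apply Cmod2_alt|].
  pose proof (is_derive_pow _ 2 _ _ (is_derive_fst f t l H)) as H1.
  pose proof (is_derive_pow _ 2 _ _ (is_derive_snd f t l H)) as H2.
  replace (2 * (fst (f t) * fst l + snd (f t) * snd l)) with
    (plus (INR 2 * fst l * fst (f t) ^ Init.Nat.pred 2) (INR 2 * snd l * snd (f t) ^ Init.Nat.pred 2))
    by (unfold plus; simpl; ring).
  exact (is_derive_plus _ _ _ _ _ H1 H2).
Qed.

Lemma is_derive_zsumR K (g : R -> Z -> R) dg t :
  (forall n, is_derive (fun s => g s n) t (dg n)) ->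
  is_derive (fun s => zsumR K (g s)) t (zsumR K dg).
Proof.
  intro H. induction K; [apply H|]. rewrite zsumR_S.
  apply is_derive_ext with
    (fun s => plus (zsumR K (g s)) (plus (g s (Z.of_nat (S K))) (g s (- Z.of_nat (S K))%Z)));
    [reflexivity|].
  apply (is_derive_plus (V := R_NormedModule)); [assumption|].
  apply (is_derive_plus (V := R_NormedModule)); apply H.
Qed.

Lemma is_derive_zero_const (g : R -> R) t : (forall s, is_derive g s 0) -> g t = g 0.
Proof.
  intro H. assert (Rabs (g t - g 0) <= 0 * Rabs (t - 0)).
  { apply (bounded_variation g (fun _ => 0)). intros. split; [apply H|]. rewrite Rabs_R0. lra. }
  rewrite Rmult_0_l in H0. pose proof (Rabs_pos (g t - g 0)).
  apply Rminus_diag_uniq, Rabs_eq_0. lra.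
Qed.

Lemma locally_constant_const (g : R -> R) t :
  (forall t0, exists d, 0 < d /\ forall s, Rabs (s - t0) < d -> g s = g t0) -> g t = g 0.
Proof.
  intro H. apply is_derive_zero_const. intro x. destruct (H x) as [d [Hd Hx]].
  apply is_derive_ext_loc with (fun _ => g x).
  - exists (mkposreal d Hd). intros y Hy. symmetry. apply Hx. exact Hy.
  - exact (is_derive_const (K := R_AbsRing) (V := R_NormedModule) (g x) x).
Qed.

Lemma is_lim_seq_inv_INR_S : is_lim_seq (fun K => / INR (S K)) 0.
Proof.
  replace (Finite 0) with (Rbar_inv p_infty) by reflexivity.
  apply is_lim_seq_inv; [|discriminate].
  apply (is_lim_seq_incr_1 INR p_infty), is_lim_seq_INR.
Qed.

Lemma is_lim_seq_O_inv (x : nat -> R) (e C : R) :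
  is_lim_seq x e -> (forall K, Rabs (x K) <= C / INR (S K)) -> e = 0.
Proof.
  intros Hx Hb.
  assert (Hw : is_lim_seq (fun K => C * / INR (S K)) 0).
  { replace (Finite 0) with (Rbar_mult C 0) by (simpl; f_equal; ring).
    apply is_lim_seq_scal_l, is_lim_seq_inv_INR_S. }
  assert (Hw' : is_lim_seq (fun K => - (C * / INR (S K))) 0).
  { replace (Finite 0) with (Rbar_opp 0) by (simpl; f_equal; ring).
    apply -> is_lim_seq_opp. exact Hw. }
  assert (H0 : is_lim_seq x 0).
  { apply is_lim_seq_le_le with (2 := Hw') (3 := Hw). intro K.
    specialize (Hb K). apply Rabs_le_between in Hb. unfold Rdiv in Hb. lra. }
  apply is_lim_seq_unique in Hx, H0. rewrite Hx in H0. injection H0. auto.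
Qed.
(** * Conservation of the L^2 norm *)

Definition kdv_mode_rhs (L delta : R) (c u : Z -> C) (n : Z) : C :=
  Cplus (Cmult (0, - (kappa L * IZR n) / 2) (c n))
        (Cmult (0, delta ^ 2 * (kappa L * IZR n) ^ 3) (u n)).

Definition l2_sum (f : Z -> C) : R := Series (zfold (fun n => Cmod (f n) ^ 2)).

(* The dispersive term is skew and drops out; only the nonlinear flux remains. *)
Lemma zsumR_energy_flux L delta (c u : Z -> C) K : real_coeffs u ->
  zsumR K (fun n => 2 * (fst (u n) * fst (kdv_mode_rhs L delta c u n)
                         + snd (u n) * snd (kdv_mode_rhs L delta c u n)))
  = kappa L * snd (zsumC K (fun n => Cmult (RtoC (IZR n)) (Cmult (u (- n)%Z) (c n)))).
Proof.
  intro Hr. rewrite snd_zsumC, <- zsumR_scal. apply zsumR_ext. intros n _.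
  rewrite Hr. unfold kdv_mode_rhs. simpl. field.
Qed.

Lemma kdv_locally_h2_bounded L delta uin u : 0 < L -> kdv_solution L delta uin u ->
  forall t0, exists d, 0 < d /\ exists b, forall s, Rabs (s - t0) < d -> h2_bound L b (u s).
Proof.
  intros HL [Hin [Hc _]] t0. destruct (Hc t0 1 Rlt_0_1) as [d [Hd Hs]].
  exists d. split; [assumption|].
  set (S0 := Series (h2_terms L (u t0))).
  assert (HS0 : 0 <= S0) by (apply Series_zfold_nonneg; [apply h2_term_nonneg|apply Hin]).
  assert (HL' : 0 < / L) by (apply Rinv_0_lt_compat, HL).
  exists (sqrt (2 * S0 + 2 / L)). intros s Hst. split; [apply sqrt_pos|].
  intro J. rewrite pow2_sqrt by (unfold Rdiv; lra).
  specialize (Hs s Hst). unfold H2_norm_sq in Hs.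
  set (D := Series (h2_terms L (csub (u s) (u t0)))) in Hs.
  assert (HD : D < / L) by (apply (Rmult_lt_reg_l L); [assumption|rewrite Rinv_r; lra]).
  eapply Rle_trans.
  { apply (zsumR_le J _ (fun n => 2 * (h2_weight L n * Cmod (csub (u s) (u t0) n) ^ 2)
                                 + 2 * (h2_weight L n * Cmod (u t0 n) ^ 2))).
    intros a _. pose proof (h2_weight_ge L a). pose proof (Cmod_sq_le_minus (u s a) (u t0 a)).
    unfold csub. nra. }
  rewrite zsumR_plus, !zsumR_scal.
  assert (zsumR J (fun n => h2_weight L n * Cmod (csub (u s) (u t0) n) ^ 2) <= D)
    by (apply zsumR_le_Series; [intro; apply h2_term_nonneg|apply h2_ex_series_csub; apply Hin]).
  assert (zsumR J (fun n => h2_weight L n * Cmod (u t0 n) ^ 2) <= S0)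
    by (apply zsumR_le_Series; [intro; apply h2_term_nonneg|apply Hin]).
  unfold Rdiv. lra.
Qed.

Lemma kdv_partial_l2_lipschitz L delta uin u K b t0 s :
  0 < L -> kdv_solution L delta uin u -> (1 <= K)%nat ->
  (forall s', Rabs (s' - t0) <= Rabs (s - t0) -> h2_bound L b (u s')) ->
  Rabs (zsumR K (fun n => Cmod (u s n) ^ 2) - zsumR K (fun n => Cmod (u t0 n) ^ 2))
  <= kappa L * flux_const L b / INR K * Rabs (s - t0).
Proof.
  intros HL [Hin [_ [_ [c [Hconv Hder]]]]] HK Hb.
  pose proof (kappa_pos L HL).
  apply (bounded_variation (fun s => zsumR K (fun n => Cmod (u s n) ^ 2))
    (fun s' => zsumR K (fun n => 2 * (fst (u s' n) * fst (kdv_mode_rhs L delta (c s') (u s') n)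
                                      + snd (u s' n) * snd (kdv_mode_rhs L delta (c s') (u s') n))))).
  intros s' Hs'. split.
  - apply (is_derive_zsumR K (fun s n => Cmod (u s n) ^ 2)). intro n.
    apply is_derive_Cmod_sq, Hder.
  - rewrite zsumR_energy_flux by apply Hin.
    rewrite Rabs_mult, (Rabs_pos_eq (kappa L)) by lra. unfold Rdiv. rewrite Rmult_assoc.
    apply Rmult_le_compat_l; [lra|].
    eapply Rle_trans; [|apply (Cmod_flux_bound L b (u s') HL (Hb s' Hs') K (c s') HK (Hconv s'))].
    eapply Rle_trans; [|apply Rmax_Cmod]. apply Rmax_r.
Qed.

(* The partial sums move by O(1/K) over a time interval on which the H^2 norm is
   bounded, so their limit does not move at all. *)
Lemma kdv_l2_conserved L delta uin u : 0 < L -> kdv_solution L delta uin u ->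
  forall t, l2_sum (u t) = l2_sum uin.
Proof.
  intros HL Hsol t. pose proof Hsol as [Hin [_ [H0 _]]].
  rewrite <- H0. apply (locally_constant_const (fun s => l2_sum (u s))). intro t0.
  destruct (kdv_locally_h2_bounded L delta uin u HL Hsol t0) as [d [Hd [b Hb]]].
  exists d. split; [assumption|]. intros s Hs. apply Rminus_diag_uniq.
  apply (is_lim_seq_O_inv
    (fun K => zsumR (S K) (fun n => Cmod (u s n) ^ 2) - zsumR (S K) (fun n => Cmod (u t0 n) ^ 2))
    _ (kappa L * flux_const L b * Rabs (s - t0))).
  - apply (is_lim_seq_incr_1 (fun K => zsumR K (fun n => Cmod (u s n) ^ 2)
                                       - zsumR K (fun n => Cmod (u t0 n) ^ 2))).
    apply is_lim_seq_minus'; apply is_lim_seq_zsumR, (l2_ex_series L), Hin.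
  - intro K. eapply Rle_trans.
    + apply (kdv_partial_l2_lipschitz L delta uin u (S K) b t0 s HL Hsol); [lia|].
      intros s' Hs'. apply Hb. lra.
    + right. field. apply not_0_INR. lia.
Qed.
(** * Symmetries of the flow *)

Lemma h2_terms_Cmod_ext L f g :
  (forall n, Cmod (f n) = Cmod (g n)) -> forall j, h2_terms L f j = h2_terms L g j.
Proof. intros H j. unfold h2_terms. rewrite !zfold_R. destruct j; rewrite ?H; reflexivity. Qed.

Lemma translate_in_H2per L a f : in_H2per L f -> in_H2per L (translate L a f).
Proof.
  intros [E Hr]. split.
  - refine (ex_series_ext _ _ _ E). intro j. symmetry.
    apply h2_terms_Cmod_ext. intro; apply Cmod_translate.
  - intro n. unfold translate. rewrite Hr, opp_IZR.
    replace (kappa L * - IZR n * a) with (- (kappa L * IZR n * a)) by ring.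
    rewrite cis_opp. apply injective_projections; unfold Cconj; simpl; ring.
Qed.

Lemma H2_norm_sq_translate_csub L a f g :
  H2_norm_sq L (csub (translate L a f) (translate L a g)) = H2_norm_sq L (csub f g).
Proof.
  unfold H2_norm_sq. f_equal. apply Series_ext, h2_terms_Cmod_ext. intro n.
  unfold csub, translate.
  replace (Cminus (Cmult (cis (kappa L * IZR n * a)) (f n)) (Cmult (cis (kappa L * IZR n * a)) (g n)))
    with (Cmult (cis (kappa L * IZR n * a)) (Cminus (f n) (g n)))
    by (apply injective_projections; simpl; ring).
  rewrite Cmod_mult, Cmod_cis. ring.
Qed.

Lemma Cmult_translate L a f n m :
  Cmult (translate L a f m) (translate L a f (n - m)%Z) =
  Cmult (cis (kappa L * IZR n * a)) (Cmult (f m) (f (n - m)%Z)).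
Proof.
  unfold translate. rewrite minus_IZR.
  replace (kappa L * IZR n * a) with (kappa L * IZR m * a + kappa L * (IZR n - IZR m) * a) by ring.
  rewrite <- cis_add. apply injective_projections; simpl; ring.
Qed.

Lemma translate_kdv_solution L delta a uin u : kdv_solution L delta uin u ->
  kdv_solution L delta (translate L a uin) (fun t => translate L a (u t)).
Proof.
  intros [Hin [Hc [H0 [c [Hconv Hder]]]]].
  split; [intro t; apply translate_in_H2per, Hin|].
  split; [intros t; setoid_rewrite H2_norm_sq_translate_csub; apply Hc|].
  split; [rewrite H0; reflexivity|].
  exists (fun t n => Cmult (cis (kappa L * IZR n * a)) (c t n)). split.
  - intros t n. unfold is_zsum.
    apply is_series_ext with (fun j => scal (cis (kappa L * IZR n * a))
                                         (zfold (fun m => Cmult (u t m) (u t (n - m)%Z)) j)).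
    { intro j. destruct j; unfold zfold; rewrite ?Cmult_translate; [reflexivity|].
      apply injective_projections; simpl; ring. }
    exact (is_series_scal (K := C_AbsRing) (V := C_NormedModule) _ _ _ (Hconv t n)).
  - intros t n. unfold translate.
    replace (Cplus _ _) with (Cmult (cis (kappa L * IZR n * a)) (kdv_mode_rhs L delta (c t) (u t) n))
      by (unfold kdv_mode_rhs; apply injective_projections; simpl; ring).
    apply is_derive_Cmult_l, Hder.
Qed.

Lemma kdv_translate_invariant L delta a uin u :
  kdv_unique L delta -> kdv_solution L delta uin u -> translate L a uin = uin ->
  forall t, translate L a (u t) = u t.
Proof.
  intros Hu Hsol Ha t. pose proof (translate_kdv_solution L delta a uin u Hsol) as Htr.
  rewrite Ha in Htr. exact (f_equal (fun v => v t) (Hu _ _ _ Htr Hsol)).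
Qed.

Lemma kdv_mean_conserved L delta uin u : kdv_solution L delta uin u ->
  forall t, u t 0%Z = uin 0%Z.
Proof.
  intros [_ [_ [H0 [c [_ Hder]]]]] t. rewrite <- H0.
  assert (Hrhs : forall s, kdv_mode_rhs L delta (c s) (u s) 0%Z = RtoC 0)
    by (intro s; unfold kdv_mode_rhs; apply injective_projections; simpl; field).
  apply injective_projections.
  - apply (is_derive_zero_const (fun s => fst (u s 0%Z))). intro s.
    replace 0 with (fst (kdv_mode_rhs L delta (c s) (u s) 0%Z)) by (rewrite Hrhs; reflexivity).
    apply is_derive_fst, Hder.
  - apply (is_derive_zero_const (fun s => snd (u s 0%Z))). intro s.
    replace 0 with (snd (kdv_mode_rhs L delta (c s) (u s) 0%Z)) by (rewrite Hrhs; reflexivity).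
    apply is_derive_snd, Hder.
Qed.

Lemma cis_shift_ne_1 L (k n : Z) : 0 < L -> k <> 0%Z -> n <> 0%Z -> (Z.abs n < Z.abs k)%Z ->
  cis (kappa L * IZR n * (L / IZR k)) <> RtoC 1.
Proof.
  intros HL Hk Hn Hnk E.
  assert (Hk' : IZR k <> 0) by (apply not_0_IZR, Hk).
  assert (Eth : kappa L * IZR n * (L / IZR k) = 2 * (PI * IZR n / IZR k))
    by (unfold kappa; field; lra).
  apply (f_equal fst) in E. simpl in E. rewrite Eth, cos_2a_sin in E.
  assert (S0 : sin (PI * IZR n / IZR k) = 0) by nra.
  apply sin_eq_0_0 in S0 as [j Hj].
  assert (Hnj : IZR n = IZR j * IZR k).
  { pose proof PI_RGT_0. apply (Rmult_eq_reg_l PI); [|lra].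
    apply (Rmult_eq_reg_r (/ IZR k)); [|apply Rinv_neq_0_compat, Hk'].
    unfold Rdiv in Hj. rewrite Hj. field. exact Hk'. }
  rewrite <- mult_IZR in Hnj. apply eq_IZR in Hnj. subst n.
  rewrite Z.abs_mul in Hnk. destruct (Z.eq_dec j 0); [subst; lia|nia].
Qed.

Lemma translate_fixed_coeff_zero L (k n : Z) f : 0 < L -> k <> 0%Z -> n <> 0%Z ->
  (Z.abs n < Z.abs k)%Z -> translate L (L / IZR k) f n = f n -> f n = RtoC 0.
Proof.
  intros HL Hk Hn Hnk E. unfold translate in E.
  pose proof (cis_shift_ne_1 L k n HL Hk Hn Hnk) as Hc.
  set (z := cis (kappa L * IZR n * (L / IZR k))) in *.
  assert (Hz : Cminus z (RtoC 1) <> RtoC 0).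
  { intro H. apply Hc. apply (f_equal fst) in H as H1. apply (f_equal snd) in H as H2.
    simpl in H1, H2. apply injective_projections; simpl; lra. }
  assert (E2 : Cmult (Cminus z (RtoC 1)) (f n) = RtoC 0).
  { transitivity (Cminus (Cmult z (f n)) (f n)); [apply injective_projections; simpl; ring|].
    rewrite E. apply injective_projections; simpl; ring. }
  rewrite <- (Cmult_1_l (f n)), <- (Cinv_l _ Hz), <- Cmult_assoc, E2.
  apply injective_projections; simpl; ring.
Qed.

Lemma kdv_low_modes_zero L delta k uin u t n : 0 < L -> k <> 0%Z -> kdv_unique L delta ->
  kdv_solution L delta uin u -> translate L (L / IZR k) uin = uin -> uin 0%Z = RtoC 0 ->
  (Z.abs n < Z.abs k)%Z -> u t n = RtoC 0.
Proof.
  intros HL Hk Hu Hsol Hinv H0 Hn. destruct (Z.eq_dec n 0) as [->|Hn0].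
  - rewrite (kdv_mean_conserved L delta uin u Hsol). exact H0.
  - apply (translate_fixed_coeff_zero L k n (u t) HL Hk Hn0 Hn).
    rewrite (kdv_translate_invariant L delta _ uin u Hu Hsol Hinv). reflexivity.
Qed.
(** * Separation of solutions with different L^2 norms *)

Lemma Cmod_minus_sq_ge (a b : C) lam : 0 < lam ->
  (1 - lam) * Cmod a ^ 2 + (1 - / lam) * Cmod b ^ 2 <= Cmod (Cminus a b) ^ 2.
Proof.
  intro Hl. rewrite !Cmod2_alt. simpl.
  assert (E : (fst a + - fst b) ^ 2 + (snd a + - snd b) ^ 2
              - ((1 - lam) * (fst a ^ 2 + snd a ^ 2) + (1 - / lam) * (fst b ^ 2 + snd b ^ 2))
              = / lam * ((lam * fst a - fst b) ^ 2 + (lam * snd a - snd b) ^ 2))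
    by (field; lra).
  assert (0 <= / lam * ((lam * fst a - fst b) ^ 2 + (lam * snd a - snd b) ^ 2)).
  { apply Rmult_le_pos; [left; apply Rinv_0_lt_compat, Hl|].
    pose proof (pow2_ge_0 (lam * fst a - fst b)).
    pose proof (pow2_ge_0 (lam * snd a - snd b)). lra. }
  unfold Re, Im in *. lra.
Qed.

Lemma l2_sum_csub_ge (f g : Z -> C) lam : 0 < lam ->
  ex_series (zfold (fun n => Cmod (f n) ^ 2)) -> ex_series (zfold (fun n => Cmod (g n) ^ 2)) ->
  (1 - lam) * l2_sum f + (1 - / lam) * l2_sum g <= l2_sum (csub f g).
Proof.
  intros Hl Ef Eg. unfold l2_sum. rewrite <- Series_zfold_lin by assumption.
  set (h := fun n => (1 - lam) * Cmod (f n) ^ 2 + (1 - / lam) * Cmod (g n) ^ 2).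
  set (d := fun n => Cmod (csub f g n) ^ 2).
  assert (Ed : ex_series (zfold d)).
  { apply ex_series_zfold_le with (fun n => 2 * Cmod (f n) ^ 2 + 2 * Cmod (g n) ^ 2);
      [|now apply ex_series_zfold_lin].
    intro a. split; [apply pow2_ge_0|apply Cmod_minus_sq_le]. }
  assert (Eh : ex_series (zfold h)) by now apply ex_series_zfold_lin.
  assert (0 <= Series (zfold (fun n => 1 * d n + -1 * h n))).
  { apply Series_zfold_nonneg; [|now apply ex_series_zfold_lin].
    intro a. unfold d, h, csub. pose proof (Cmod_minus_sq_ge (f a) (g a) lam Hl). lra. }
  rewrite Series_zfold_lin in H by assumption. fold d h. lra.
Qed.

Lemma weighted_gap_pos A B : 0 <= A -> 0 <= B -> A <> B ->
  exists lam, 0 < lam /\ 0 < (1 - lam) * A + (1 - / lam) * B.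
Proof.
  intros HA HB HAB.
  destruct (Req_dec A 0) as [->|HA0]; [exists 2; lra|].
  destruct (Req_dec B 0) as [->|HB0]; [exists (/ 2); rewrite Rinv_inv; lra|].
  assert (sA : 0 < sqrt A) by (apply sqrt_lt_R0; lra).
  assert (sB : 0 < sqrt B) by (apply sqrt_lt_R0; lra).
  exists (sqrt B / sqrt A). split; [apply Rdiv_lt_0_compat; assumption|].
  (* with [lam = sqrt B / sqrt A] the bound is [(sqrt A - sqrt B)^2] *)
  replace ((1 - sqrt B / sqrt A) * A + (1 - / (sqrt B / sqrt A)) * B) with ((sqrt A - sqrt B) ^ 2).
  - apply pow2_gt_0. intro E. apply HAB.
    rewrite <- (sqrt_sqrt A), <- (sqrt_sqrt B) by lra. replace (sqrt A) with (sqrt B) by lra.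
    reflexivity.
  - assert (EA : A = sqrt A * sqrt A) by (rewrite sqrt_sqrt; lra).
    assert (EB : B = sqrt B * sqrt B) by (rewrite sqrt_sqrt; lra).
    set (a := sqrt A) in *. set (b := sqrt B) in *. rewrite EA, EB. field. lra.
Qed.

Lemma kdv_l2_distance_bounded_below L delta uin1 uin2 u1 u2 : 0 < L ->
  in_H2per L uin1 -> in_H2per L uin2 -> L2_norm L uin1 <> L2_norm L uin2 ->
  kdv_solution L delta uin1 u1 -> kdv_solution L delta uin2 u2 ->
  exists eps, 0 < eps /\ forall t, eps < L2_norm L (csub (u1 t) (u2 t)).
Proof.
  intros HL H1 H2 Hneq S1 S2.
  assert (HA : 0 <= l2_sum uin1)
    by (apply Series_zfold_nonneg; [intro; apply pow2_ge_0|apply (l2_ex_series L), H1]).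
  assert (HB : 0 <= l2_sum uin2)
    by (apply Series_zfold_nonneg; [intro; apply pow2_ge_0|apply (l2_ex_series L), H2]).
  assert (HAB : l2_sum uin1 <> l2_sum uin2)
    by (intro E; apply Hneq; unfold L2_norm; fold (l2_sum uin1) (l2_sum uin2); rewrite E;
        reflexivity).
  destruct (weighted_gap_pos _ _ HA HB HAB) as [lam [Hl Hpos]].
  set (gap := (1 - lam) * l2_sum uin1 + (1 - / lam) * l2_sum uin2) in Hpos.
  assert (Hs : 0 < sqrt (L * gap)) by (apply sqrt_lt_R0; nra).
  exists (sqrt (L * gap) / 2). split; [lra|]. intro t.
  assert (sqrt (L * gap) <= L2_norm L (csub (u1 t) (u2 t))).
  { apply sqrt_le_1_alt, Rmult_le_compat_l; [lra|]. unfold gap.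
    rewrite <- (kdv_l2_conserved L delta uin1 u1 HL S1 t),
            <- (kdv_l2_conserved L delta uin2 u2 HL S2 t).
    apply l2_sum_csub_ge; [assumption| |]; apply (l2_ex_series L).
    - apply (proj1 S1).
    - apply (proj1 S2). }
  lra.
Qed.

Theorem proposition3p5 (L delta : R) (k : Z)
  (uin1 uin2 : Z -> C) (u1 u2 : R -> Z -> C) :
  0 < L -> k <> 0%Z ->
  kdv_unique L delta ->
  in_H2per L uin1 -> in_H2per L uin2 ->
  uin1 0%Z = RtoC 0 -> uin2 0%Z = RtoC 0 ->
  translate L (L / IZR k) uin1 = uin1 ->
  translate L (L / IZR k) uin2 = uin2 ->
  L2_norm L uin1 <> L2_norm L uin2 ->
  kdv_solution L delta uin1 u1 ->
  kdv_solution L delta uin2 u2 ->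
  (forall t : R, translate L (L / IZR k) (u1 t) = u1 t /\
                 translate L (L / IZR k) (u2 t) = u2 t) /\
  (forall (M : nat) (t : R), (0 < M)%nat -> (Z.of_nat M < Z.abs k)%Z ->
       PM M (u1 t) = PM M (u2 t)) /\
  (exists eps : R, 0 < eps /\
     forall T : R, exists t : R, T <= t /\
       eps < L2_norm L (csub (u1 t) (u2 t))).
Proof.
  intros HL Hk Hu H1 H2 H10 H20 T1 T2 Hneq S1 S2.
  split; [|split].
  - intro t. split; eapply kdv_translate_invariant; eassumption.
  - intros M t _ HMk. apply functional_extensionality. intro n. unfold PM.
    destruct (Z.leb_spec (Z.abs n) (Z.of_nat M)); [|reflexivity].
    rewrite (kdv_low_modes_zero L delta k uin1 u1 t n),
            (kdv_low_modes_zero L delta k uin2 u2 t n); trivial; lia.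
  - destruct (kdv_l2_distance_bounded_below L delta uin1 uin2 u1 u2 HL H1 H2 Hneq S1 S2)
      as [eps [Heps Hdist]].
    exists eps. split; [assumption|]. intro T. exists T. split; [lra|apply Hdist].
Qed.
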